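(* Let $\tau$ be a finite relational vocabulary and $k\in\mathbb N$. For every monadic $k$-interpretation scheme $\mathbf c$ for $\tau$ there exists a monadic $(k+2)$-interpretation scheme $\mathbf c'$ for $\tau$ such that: $k_1^{\mathbf c'}=0$; $k_2^{\mathbf c'}=k_2^{\mathbf c}+2$; and for every $k_2^{\mathbf c}$-tree $\mathfrak T$ there exists a $k_2^{\mathbf c'}$-tree $\mathfrak T'$ with $\mathfrak T^{[\mathbf c]}\cong\mathfrak T'^{[\mathbf c']}$. Consequently $\mathfrak K^{mo}_{\mathbf c}\subseteq\mathfrak K^{mo}_{\mathbf c'}$.
   Context: Trees: $\tau_{trees}=\{\le,c_{rt}\}$ ($c_{rt}$ a constant). A tree is a $\tau_{trees}$-structure $\mathfrak T$ such that for every $t$ the set $\{s:s\le^{\mathfrak T}t\}$ is linearly ordered by $\le^{\mathfrak T}$, and $c_{rt}^{\mathfrak T}\le^{\mathfrak T}x$ for all $x$. The vocabulary of $k$-trees is $\tau_{k\text{-trees}}=\{\le,c_{rt},P_1,\dots,P_k\}$ with $P_i$ unary; a $k$-tree is a $\tau_{k\text{-trees}}$-structure whose $\tau_{trees}$-reduct is a tree. Monadic interpretation schemes: a monadic $k$-interpretation scheme $\mathbf c$ for $\tau$ consists of natural numbers $k_1^{\mathbf c},k_2^{\mathbf c}\le k$; for each $l\le k_1^{\mathbf c}$ a monadic second-order $\tau_{k_2^{\mathbf c}\text{-trees}}$-formula $\varphi^{\mathbf c}_{=,l}(x)$; and for every $n$-place $R\in\tau$ and every $\eta:\{1,\dots,n\}\to\{0,\dots,k_1^{\mathbf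 c}\}$ a monadic second-order $\tau_{k_2^{\mathbf c}\text{-trees}}$-formula $\varphi^{\mathbf c}_{R,\eta}(x_1,\dots,x_n)$. For a $k_2^{\mathbf c}$-tree $\mathfrak T$, the interpretation $\mathfrak T^{[\mathbf c]}$ is the $\tau$-structure $M$ with $|M|=\{(t,l)\in|\mathfrak T|\times\{0,\dots,k_1^{\mathbf c}\}:\mathfrak T\models\varphi_{=,l}(t)\}$ and, for $n$-place $R$, $R^M=\{((t_i,l_i))_{i\le n}\in|M|^n:\mathfrak T\models\varphi_{R,(l_i)_{i\le n}}(t_1,\dots,t_n)\}$. $\mathfrak K^{mo}_{\mathbf c}$ is the class of $\tau$-structures isomorphic to $\mathfrak T^{[\mathbf c]}$ for some $k_2^{\mathbf c}$-tree $\mathfrak T$. *)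

From mathcomp Require Import all_boot.
Set Implicit Arguments.
Unset Strict Implicit.
Unset Printing Implicit Defensive.

(* A finite relational vocabulary tau: a finite type of relation symbols,
   each with an arity.  Tuples of length n are functions 'I_n -> M. *)

Record structure (Sym : finType) (ar : Sym -> nat) := Structure {
  carrier :> Type;
  rel : forall s : Sym, ('I_(ar s) -> carrier) -> Prop
}.

Definition isomorphic (Sym : finType) (ar : Sym -> nat)
    (M N : structure ar) : Prop :=
  exists (f : M -> N) (g : N -> M),
    cancel f g /\ cancel g f /\
    forall (s : Sym) (a : 'I_(ar s) -> M), rel a <-> rel (f \o a).

Record ktree (k : nat) := KTree {
  node :> Type;
  tle : node -> node -> Prop;
  troot : node;
  tP : 'I_k -> node -> Prop;
  tle_refl : forall x, tle x x;
  tle_antisym : forall x y, tle x y -> tle y x -> x = y;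
  tle_trans : forall x y z, tle x y -> tle y z -> tle x z;
  tle_lin : forall t x y, tle x t -> tle y t -> tle x y \/ tle y x;
  troot_min : forall x, tle troot x
}.

Inductive term := TVar of nat | TRoot.

Inductive mso (k : nat) : Type :=
| FLe  : term -> term -> mso k
| FEq  : term -> term -> mso k
| FP   : 'I_k -> term -> mso k
| FIn  : term -> nat -> mso k
| FNot : mso k -> mso k
| FAnd : mso k -> mso k -> mso k
| FEx1 : nat -> mso k -> mso k
| FEx2 : nat -> mso k -> mso k.

Section Semantics.
Variables (k : nat) (T : ktree k).

Definition eval_term (e1 : nat -> T) (t : term) : T :=
  match t with TVar x => e1 x | TRoot => troot T end.

Definition upd {A : Type} (e : nat -> A) (j : nat) (a : A) : nat -> A :=
  fun i => if i == j then a else e i.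

Fixpoint sat (e1 : nat -> T) (e2 : nat -> T -> Prop) (f : mso k) : Prop :=
  match f with
  | FLe t1 t2 => tle (eval_term e1 t1) (eval_term e1 t2)
  | FEq t1 t2 => eval_term e1 t1 = eval_term e1 t2
  | FP i t => tP i (eval_term e1 t)
  | FIn t X => e2 X (eval_term e1 t)
  | FNot g => ~ sat e1 e2 g
  | FAnd g h => sat e1 e2 g /\ sat e1 e2 h
  | FEx1 x g => exists a : T, sat (upd e1 x a) e2 g
  | FEx2 X g => exists A : T -> Prop, sat e1 (upd e2 X A) g
  end.

(* environment for a formula phi(x_1,...,x_n): variable i-1 |-> t_i *)
Definition tuple_env (n : nat) (t : 'I_n -> T) : nat -> T :=
  fun j => match (insub j : option 'I_n) with Some i => t i | None => troot T end.

Definition holds (n : nat) (f : mso k) (t : 'I_n -> T) : Prop :=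
  sat (tuple_env t) (fun _ _ => False) f.
End Semantics.

Definition term_wf (V : nat -> Prop) (t : term) : Prop :=
  match t with TVar x => V x | TRoot => True end.

Fixpoint mso_wf (k : nat) (V W : nat -> Prop) (f : mso k) : Prop :=
  match f with
  | FLe t1 t2 | FEq t1 t2 => term_wf V t1 /\ term_wf V t2
  | FP _ t => term_wf V t
  | FIn t X => term_wf V t /\ W X
  | FNot g => mso_wf V W g
  | FAnd g h => mso_wf V W g /\ mso_wf V W h
  | FEx1 x g => mso_wf (fun y => y = x \/ V y) W g
  | FEx2 X g => mso_wf V (fun Y => Y = X \/ W Y) g
  end.

(* an MSO formula phi(x_1,...,x_n): free variables among x_1..x_n
   (encoded as variables 0..n-1), no free set variables *)
Arguments mso_wf {k}.
Definition formula_in (k n : nat) (f : mso k) : Prop :=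
  mso_wf (fun y => y < n) (fun _ => False) f.

(* indices l in {0,...,k1} are elements of 'I_k1.+1 *)
Record scheme (Sym : finType) (ar : Sym -> nat) (k : nat) := Scheme {
  k1 : nat;
  k2 : nat;
  k1_le : k1 <= k;
  k2_le : k2 <= k;
  phi_eq : 'I_k1.+1 -> mso k2;
  phi_rel : forall s : Sym, ('I_(ar s) -> 'I_k1.+1) -> mso k2;
  phi_eq_wf : forall l, @formula_in k2 1 (phi_eq l);
  phi_rel_wf : forall s eta, @formula_in k2 (ar s) (@phi_rel s eta)
}.
Arguments phi_eq {Sym ar k} c l : rename.
Arguments phi_rel {Sym ar k} c s eta : rename.

Section Interp.
Variables (Sym : finType) (ar : Sym -> nat) (k : nat) (c : scheme ar k).
Variable T : ktree (k2 c).

Definition interp_dom : Type :=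
  { p : T * 'I_(k1 c).+1 | holds (phi_eq c p.2) (fun _ : 'I_1 => p.1) }.

Definition interp_rel (s : Sym) (a : 'I_(ar s) -> interp_dom) : Prop :=
  holds (phi_rel c s (fun i => (sval (a i)).2)) (fun i => (sval (a i)).1).

Definition interp : structure ar := @Structure Sym ar interp_dom interp_rel.
End Interp.
Arguments interp {Sym ar k} c T.

Definition Kmo (Sym : finType) (ar : Sym -> nat) (k : nat) (c : scheme ar k)
    (M : structure ar) : Prop :=
  exists T : ktree (k2 c), isomorphic M (interp c T).

(* Hang below every node t of T a chain (t,0) < ... < (t,k1) of new nodes,
   marked by a fresh label, and let the element (t,l) of T^[c] be the chain
   node (t,l). An MSO formula about T is read in the extended tree by letting
   every node stand for its base, the largest original node below it, which
   is MSO-definable; set variables are read on original nodes only. The level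
   l of a chain node is definable as well, by induction on l through its
   immediate new predecessor, so the formulas of c' guess the levels of their
   arguments and evaluate the translated formulas of c. *)

From mathcomp Require Import all_boot zify.
From Stdlib Require Import Classical FunctionalExtensionality ProofIrrelevance.
Set Implicit Arguments.
Unset Strict Implicit.
Unset Printing Implicit Defensive.

Definition new_label (k : nat) : 'I_(k + 2) := rshift k ord0.

Section ChainExtension.
Variables (k n : nat) (T : ktree k).

Definition ext_node : Type := (T + T * 'I_n.+1)%type.

Definition base (x : ext_node) : T := match x with inl t | inr (t, _) => t end.

Definition is_new (x : ext_node) : bool := if x is inr _ then true else false.

(* The value on original nodes is junk: they are not elements of the interpretation. *)
Definition ext_pos (x : ext_node) : T * 'I_n.+1 :=
  match x with inl t => (t, ord0) | inr p => p end.

Definition ext_le (x y : ext_node) : Prop :=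
  match x, y with
  | inl s, _ => tle s (base y)
  | inr _, inl _ => False
  | inr (s, i), inr (t, j) => s = t /\ i <= j
  end.

Definition ext_lt (x y : ext_node) : Prop := ext_le x y /\ x <> y.

Lemma ext_le_base x y : ext_le x y -> tle (base x) (base y).
Proof. by case: x => [s|[s i]] //; case: y => [t|[t j]] //= [-> _]; apply: tle_refl. Qed.

Lemma ext_le_refl x : ext_le x x.
Proof. by case: x => [s|[s i]] /=; [apply: tle_refl | split]. Qed.

Lemma ext_le_antisym x y : ext_le x y -> ext_le y x -> x = y.
Proof.
case: x => [s|[s i]]; case: y => [t|[t j]] //=.
- by move=> st ts; rewrite (tle_antisym st ts).
- by move=> [-> ij] [_ ji]; congr (inr (_, _)); apply/val_inj/eqP; rewrite eqn_leq ij ji.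
Qed.

Lemma ext_le_trans x y z : ext_le x y -> ext_le y z -> ext_le x z.
Proof.
case: x => [s|[s i]] xy yz; first exact: tle_trans xy (ext_le_base yz).
case: y => [t|[t j]] // in xy yz *; case: z => [u|[u l]] // in yz *.
by case: xy yz => [-> ij] [-> jl]; split=> //; apply: leq_trans ij jl.
Qed.

Lemma ext_le_total_below z x y : ext_le x z -> ext_le y z -> ext_le x y \/ ext_le y x.
Proof.
case: x => [s|[s i]]; case: y => [t|[t j]] /=.
- exact: tle_lin.
- by case: z => [u|[u l]] //= su [-> _]; left.
- by case: z => [u|[u l]] //= [-> _] tu; right.
- case: z => [u|[u l]] //= [-> _] [-> _].
  by case: (leqP i j) => [ij | /ltnW ji]; [left | right].
Qed.

Lemma ext_root_min x : ext_le (inl (troot T)) x.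
Proof. exact: troot_min. Qed.

(* The first new label marks the chain nodes, the second one is empty. *)
Definition ext_P (i : 'I_(k + 2)) (x : ext_node) : Prop :=
  match split i with
  | inl j => tP j (base x)
  | inr j => (j == ord0) && is_new x
  end.

Definition ext_tree : ktree (k + 2) :=
  KTree ext_P ext_le_refl ext_le_antisym ext_le_trans ext_le_total_below ext_root_min.

Lemma ext_P_lshift i x : ext_P (lshift 2 i) x = tP i (base x).
Proof. by rewrite /ext_P (unsplitK (inl i)). Qed.

Lemma ext_P_new x : ext_P (new_label k) x = is_new x.
Proof. by rewrite /ext_P (unsplitK (inr ord0)). Qed.

Definition at_level (l : nat) (x : ext_node) : bool :=
  if x is inr (_, i) then i == l :> nat else false.

Lemma at_level_new l x : at_level l x -> is_new x.
Proof. by case: x => [|[]]. Qed.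

Lemma new_ext_lt t i w : is_new w ->
  ext_lt w (inr (t, i)) <-> exists2 j : 'I_n.+1, w = inr (t, j) & j < i.
Proof.
case: w => [//|[s j]] _; split.
- case=> -[-> ji] ne; exists j => //; rewrite ltn_neqAle ji andbT.
  by apply/eqP => /val_inj eji; apply: ne; rewrite eji.
- case=> j' [-> ->] ji; split; first by split=> //; apply: ltnW.
  by case=> eji; move: ji; rewrite eji ltnn.
Qed.

Lemma at_level0P x : is_new x ->
  (forall w, ext_lt w x -> ~ is_new w) <-> at_level 0 x.
Proof.
case: x => [//|[t i]] _ /=; split=> [no_new | /eqP i0 w].
- apply/negPn/negP => inz.
  have lt0 : ext_lt (inr (t, ord0)) (inr (t, i)).
    by apply/new_ext_lt => //; exists ord0; rewrite // lt0n.
  by have := no_new _ lt0.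
- by move=> wx nw; have [j _] := (new_ext_lt t i nw).1 wx; rewrite i0.
Qed.

Lemma at_levelSP l x : is_new x ->
  (exists u, ext_lt u x /\ at_level l u /\
             forall w, ext_lt w x -> is_new w -> ext_le w u)
  <-> at_level l.+1 x.
Proof.
case: x => [//|[t i]] _; have := ltn_ord i; rewrite /= => ltin; split.
- case=> u [ux [ul umax]].
  have [j uj ji] := (new_ext_lt t i (at_level_new ul)).1 ux.
  subst u; move: ul => /eqP jl.
  apply/negPn/negP => ne.
  have lt1 : ext_lt (inr (t, inord l.+1)) (inr (t, i)).
    by apply/new_ext_lt => //; exists (inord l.+1); rewrite // inordK; lia.
  by have /= [_] := umax _ lt1 isT; rewrite inordK; lia.
- move=> /eqP il; exists (inr (t, inord l)); split; [|split].
  + by apply/new_ext_lt => //; exists (inord l); rewrite // inordK; lia.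
  + by rewrite /= inordK; lia.
  + move=> w wx nw; have [j -> ji] := (new_ext_lt t i nw).1 wx.
    by split=> //; rewrite inordK; lia.
Qed.
End ChainExtension.

Arguments FLe {k}.
Arguments FEq {k}.
Arguments FIn {k}.

Section DerivedConnectives.
Variable k : nat.

Definition Ftrue : mso k := FEq TRoot TRoot.
Definition Fimp (f g : mso k) : mso k := FNot (FAnd f (FNot g)).
Definition Fall (x : nat) (f : mso k) : mso k := FNot (FEx1 x (FNot f)).
Definition bigAnd (A : Type) (s : seq A) (F : A -> mso k) : mso k :=
  foldr (fun a g => FAnd (F a) g) Ftrue s.
Definition bigOr (A : Type) (s : seq A) (F : A -> mso k) : mso k :=
  FNot (bigAnd s (fun a => FNot (F a))).
End DerivedConnectives.
Arguments Ftrue {k}.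

Lemma upd_same (A : Type) (e : nat -> A) j a : upd e j a j = a.
Proof. by rewrite /upd eqxx. Qed.

Lemma upd_other (A : Type) (e : nat -> A) j a i : i != j -> upd e j a i = e i.
Proof. by rewrite /upd => /negbTE ->. Qed.

Definition tvar (t : term) : nat := if t is TVar x then x else 0.

Section DerivedSemantics.
Variables (k : nat) (T : ktree k).
Implicit Types (e : nat -> T) (E : nat -> T -> Prop).

Lemma eval_term_upd e j a t : tvar t < j -> eval_term (upd e j a) t = eval_term e t.
Proof. by case: t => [x|] //= xj; rewrite upd_other // neq_ltn xj. Qed.

Lemma sat_Fimp e E f g : sat e E (Fimp f g) <-> (sat e E f -> sat e E g).
Proof.
split=> /= [fg sf | fg [sf]]; last by apply; apply: fg.
by apply: NNPP => ng; apply: fg.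
Qed.

Lemma sat_Fall e E x f : sat e E (Fall x f) <-> forall a : T, sat (upd e x a) E f.
Proof. by split=> /= [all_f a | all_f [a]]; [apply: NNPP => ?; apply: all_f; exists a | ]. Qed.

Lemma sat_bigAnd (A : eqType) (s : seq A) F e E :
  sat e E (bigAnd s F) <-> forall a, a \in s -> sat e E (F a).
Proof.
elim: s => [|b s IH] /=; first by split.
rewrite IH; split=> [[Fb Fs] a | Fall_s]; first by rewrite inE => /predU1P [->|/Fs].
by split=> [|a as_]; apply: Fall_s; rewrite inE ?eqxx ?as_ ?orbT.
Qed.

Lemma sat_bigOr (A : eqType) (s : seq A) F e E :
  sat e E (bigOr s F) <-> exists2 a, a \in s & sat e E (F a).
Proof.
rewrite /bigOr /= sat_bigAnd; split=> [no_all | [a as_ Fa] no_all]; last exact: no_all as_ Fa.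
by apply: NNPP => no_ex; apply: no_all => a as_ Fa; apply: no_ex; exists a.
Qed.
End DerivedSemantics.

Lemma term_wf_cons (V : nat -> Prop) x t :
  term_wf V t -> term_wf (fun y => y = x \/ V y) t.
Proof. by case: t => //= y; right. Qed.

Lemma mso_wf_bigAnd k (A : eqType) (s : seq A) (F : A -> mso k) V W :
  (forall a, a \in s -> mso_wf V W (F a)) -> mso_wf V W (bigAnd s F).
Proof.
elim: s => [|a s IH] //= wfF; split; first by apply: wfF; rewrite inE eqxx.
by apply: IH => b bs; apply: wfF; rewrite inE bs orbT.
Qed.

Lemma mso_wf_bigOr k (A : eqType) (s : seq A) (F : A -> mso k) V W :
  (forall a, a \in s -> mso_wf V W (F a)) -> mso_wf V W (bigOr s F).
Proof. by move=> wfF; apply: mso_wf_bigAnd => a /wfF. Qed.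

Section ExtensionFormulas.
Variable k : nat.

Definition FNew (v : nat) : mso (k + 2) := FP (new_label k) (TVar v).

Definition FLt (w v : nat) : mso (k + 2) :=
  FAnd (FLe (TVar w) (TVar v)) (FNot (FEq (TVar w) (TVar v))).

Fixpoint FLevel (l v : nat) : mso (k + 2) :=
  FAnd (FNew v)
    (if l is l'.+1 then
       FEx1 v.+1 (FAnd (FLt v.+1 v) (FAnd (FLevel l' v.+1)
         (Fall v.+2 (Fimp (FAnd (FLt v.+2 v) (FNew v.+2)) (FLe (TVar v.+2) (TVar v.+1))))))
     else Fall v.+1 (Fimp (FLt v.+1 v) (FNot (FNew v.+1)))).

Definition FBase (a : nat) (t : term) : mso (k + 2) :=
  let b := (a + tvar t).+1 in
  FAnd (FNot (FNew a)) (FAnd (FLe (TVar a) t)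
    (Fall b (Fimp (FAnd (FNot (FNew b)) (FLe (TVar b) t)) (FLe (TVar b) (TVar a))))).

(* The anchor variable [a] exceeds the variables of the atom, hence is fresh. *)
Fixpoint lift_mso (f : mso k) : mso (k + 2) :=
  match f with
  | FLe t1 t2 => let a := (tvar t1 + tvar t2).+1 in
      FEx1 a (FAnd (FBase a t1) (FLe (TVar a) t2))
  | FEq t1 t2 => let a := (tvar t1 + tvar t2).+1 in
      FEx1 a (FAnd (FBase a t1) (FBase a t2))
  | FP i t => FP (lshift 2 i) t
  | FIn t X => let a := (tvar t).+1 in FEx1 a (FAnd (FBase a t) (FIn (TVar a) X))
  | FNot g => FNot (lift_mso g)
  | FAnd g h => FAnd (lift_mso g) (lift_mso h)
  | FEx1 x g => FEx1 x (lift_mso g)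
  | FEx2 X g => FEx2 X (lift_mso g)
  end.

Lemma FLevel_wf l v V W : V v -> mso_wf V W (FLevel l v).
Proof. by elim: l v V => [|l IH] v V Vv /=; repeat split; auto. Qed.

Lemma FBase_wf a t V W : V a -> term_wf V t -> mso_wf V W (FBase a t).
Proof. by move=> Va Vt /=; repeat split; auto using term_wf_cons. Qed.

Lemma lift_mso_wf f V W : mso_wf V W f -> mso_wf V W (lift_mso f).
Proof.
elim: f V W => [t1 t2|t1 t2|i t|t X|g IH|g IHg h IHh|x g IH|X g IH] V W;
  cbn -[FBase] => //; try case=> wf1 wf2;
  by repeat (apply: FBase_wf || split); auto using term_wf_cons.
Qed.
End ExtensionFormulas.

Section ExtensionSemantics.
Variables (k n : nat) (T : ktree k).
Notation T' := (ext_tree n T).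
Implicit Types (e : nat -> T') (E : nat -> T' -> Prop).

Lemma sat_FNew e E v : sat e E (FNew k v) = is_new (e v).
Proof. exact: ext_P_new. Qed.

Lemma sat_FLt e E w v : sat e E (FLt k w v) = ext_lt (e w) (e v).
Proof. by []. Qed.

Lemma sat_FLevel l v e E : sat e E (FLevel k l v) <-> at_level l (e v).
Proof.
elim: l v e => [|l IH] v e; cbn -[FNew FLt Fall Fimp]; rewrite sat_FNew.
- have step w : sat (upd e v.+1 w) E (Fimp (FLt k v.+1 v) (FNot (FNew k v.+1)))
                <-> (ext_lt w (e v) -> ~ is_new w).
    by rewrite sat_Fimp; cbn -[FNew]; rewrite sat_FNew upd_same upd_other //; lia.
  rewrite sat_Fall; split=> [[new_v below] | lvl].
    by apply/at_level0P => // w; apply/step/below.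
  have new_v := at_level_new lvl; split=> // w; apply/step; move: w; exact/at_level0P.
- have step u :
    sat (upd e v.+1 u) E (FLt k v.+1 v) /\ sat (upd e v.+1 u) E (FLevel k l v.+1) /\
    sat (upd e v.+1 u) E (Fall v.+2 (Fimp (FAnd (FLt k v.+2 v) (FNew k v.+2))
                                          (FLe (TVar v.+2) (TVar v.+1))))
    <-> ext_lt u (e v) /\ at_level l u /\
        forall w, ext_lt w (e v) -> is_new w -> ext_le w u.
    have [v01 v02 v12] : [/\ v != v.+1, v != v.+2 & v.+1 != v.+2] by split; lia.
    have bounded w : sat (upd (upd e v.+1 u) v.+2 w) E
        (Fimp (FAnd (FLt k v.+2 v) (FNew k v.+2)) (FLe (TVar v.+2) (TVar v.+1)))
      <-> (ext_lt w (e v) -> is_new w -> ext_le w u).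
      rewrite sat_Fimp; cbn -[FNew]; rewrite sat_FNew upd_same (upd_other _ _ v02).
      by rewrite (upd_other _ _ v12) (upd_other _ _ v01) upd_same /ext_lt; tauto.
    rewrite sat_FLt IH sat_Fall upd_same (upd_other _ _ v01).
    by split=> -[ux [lu below]]; do 2!split=> //; move=> w; apply/bounded/below.
  split=> [[new_v [u /step su]] | lvl]; first by apply/at_levelSP => //; exists u.
  have new_v := at_level_new lvl; split=> //.
  by have [u su] := (at_levelSP l new_v).2 lvl; exists u; apply/step.
Qed.

Lemma sat_FBase e E a t : sat e E (FBase k a t) <-> e a = inl (base (eval_term e t)).
Proof.
rewrite /FBase; cbn -[FNew Fall Fimp]; rewrite sat_FNew sat_Fall.
set b := (a + tvar t).+1; have [ab tb] : a != b /\ tvar t < b by split; lia.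
have below_a y : sat (upd e b y) E
    (Fimp (FAnd (FNot (FNew k b)) (FLe (TVar b) t)) (FLe (TVar b) (TVar a)))
  <-> (~ is_new y -> ext_le y (eval_term e t) -> ext_le y (e a)).
  rewrite sat_Fimp; cbn -[FNew]; rewrite sat_FNew upd_same eval_term_upd //.
  by rewrite (upd_other _ _ ab); tauto.
split=> [[old_a [a_le_t a_max]] | ea].
- case ea: (e a) => [s|p]; last by move: old_a; rewrite ea => /(_ isT).
  have := (below_a _).1 (a_max (inl (base (eval_term e t)))) notF (tle_refl _).
  by move: a_le_t; rewrite ea => /tle_antisym le_s /le_s ->.
- rewrite ea; do 2!split=> //; first exact: tle_refl.
  by move=> y; apply/below_a; rewrite ea; case: y => [s _ //|p /(_ isT)].
Qed.

Lemma sat_ex_FBase e E a t g : tvar t < a ->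
  sat e E (FEx1 a (FAnd (FBase k a t) g))
  <-> sat (upd e a (inl (base (eval_term e t)))) E g.
Proof.
move=> ta; split=> [[y [/sat_FBase]] | g_sat].
  by rewrite upd_same eval_term_upd // => ->.
exists (inl (base (eval_term e t))); split=> //.
by apply/sat_FBase; rewrite upd_same eval_term_upd.
Qed.

Lemma eval_term_base e t : eval_term (fun i => base (e i)) t = base (eval_term e t).
Proof. by case: t. Qed.

Lemma base_upd e x y : (fun i => base (upd e x y i)) = upd (fun i => base (e i)) x (base y).
Proof. by apply: functional_extensionality => i; rewrite /upd; case: (i == x). Qed.

Lemma restrict_upd E X (A : T' -> Prop) :
  (fun Y t => upd E X A Y (inl t)) = upd (fun Y t => E Y (inl t)) X (fun t => A (inl t)).
Proof. by apply: functional_extensionality => Y; rewrite /upd; case: (Y == X). Qed.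

Lemma sat_lift_mso (f : mso k) e E :
  sat e E (lift_mso f) <-> sat (fun i => base (e i)) (fun X t => E X (inl t)) f.
Proof.
elim: f e E => [t1 t2|t1 t2|i t|t X|g IH|g IHg h IHh|x g IH|X g IH] e E.
- rewrite [lift_mso _]/= sat_ex_FBase; last lia.
  by rewrite /= upd_same eval_term_upd ?eval_term_base //; lia.
- rewrite [lift_mso _]/= sat_ex_FBase; last lia.
  rewrite sat_FBase upd_same eval_term_upd /= ?eval_term_base; last lia.
  by split=> [[]|->].
- by rewrite /= ext_P_lshift eval_term_base.
- by rewrite [lift_mso _]/= sat_ex_FBase //= upd_same eval_term_base.
- by rewrite /= IH.
- by rewrite /= IHg IHh.
- split=> [[y sy] | [s ss]]; first by exists (base y); rewrite -base_upd; apply/IH.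
  by exists (inl s); apply/IH; rewrite base_upd.
- split=> [[A sA] | [A sA]].
    by exists (fun t => A (inl t)); rewrite -restrict_upd; apply/IH.
  by exists (fun y => A (base y)); apply/IH; rewrite restrict_upd.
Qed.
End ExtensionSemantics.

Lemma tuple_env_ord k (T : ktree k) m (x : 'I_m -> T) (i : 'I_m) : tuple_env x i = x i.
Proof. by rewrite /tuple_env valK. Qed.

Lemma holds_lift_mso k n (T : ktree k) m (f : mso k) (x : 'I_m -> ext_tree n T) :
  holds (lift_mso f) x <-> holds f (fun i => base (x i)).
Proof.
rewrite /holds sat_lift_mso.
suff -> : (fun j => base (tuple_env x j)) = tuple_env (fun i => base (x i)) by [].
by apply: functional_extensionality => j; rewrite /tuple_env; case: insub.
Qed.

Section LiftScheme.
Variables (Sym : finType) (ar : Sym -> nat) (k : nat) (c : scheme ar k).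

Definition lift_phi_eq (_ : 'I_1) : mso (k2 c + 2) :=
  bigOr (enum 'I_(k1 c).+1)
    (fun l => FAnd (FLevel (k2 c) l 0) (lift_mso (phi_eq c l))).

Definition lift_phi_rel (s : Sym) (_ : 'I_(ar s) -> 'I_1) : mso (k2 c + 2) :=
  bigOr (enum {ffun 'I_(ar s) -> 'I_(k1 c).+1})
    (fun eta => FAnd (bigAnd (enum 'I_(ar s)) (fun i => FLevel (k2 c) (eta i) i))
                     (lift_mso (phi_rel c s eta))).
Arguments lift_phi_rel : clear implicits.

Lemma lift_phi_eq_wf l : formula_in 1 (lift_phi_eq l).
Proof.
apply: mso_wf_bigOr => l' _; split; first exact: FLevel_wf.
exact/lift_mso_wf/phi_eq_wf.
Qed.

Lemma lift_phi_rel_wf s eta : formula_in (ar s) (lift_phi_rel s eta).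
Proof.
apply: mso_wf_bigOr => eta' _; split; last exact/lift_mso_wf/phi_rel_wf.
by apply: mso_wf_bigAnd => i _; apply: FLevel_wf.
Qed.

Lemma lift_k2_le : k2 c + 2 <= k + 2.
Proof. by rewrite leq_add2r k2_le. Qed.

Definition lift_scheme : scheme ar (k + 2) :=
  Scheme (isT : 0 <= k + 2) lift_k2_le lift_phi_eq_wf lift_phi_rel_wf.
End LiftScheme.
Arguments lift_phi_rel {Sym ar k} c s.

Section LiftInterpretation.
Variables (Sym : finType) (ar : Sym -> nat) (k : nat) (c : scheme ar k) (T : ktree (k2 c)).
Notation T' := (ext_tree (k1 c) T).

Lemma lift_phi_eqP o (x : T') :
  holds (lift_phi_eq c o) (fun _ : 'I_1 => x)
  <-> exists2 p, x = inr p & holds (phi_eq c p.2) (fun _ : 'I_1 => p.1).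
Proof.
rewrite /holds sat_bigOr; split.
- case=> l _ [/sat_FLevel]; rewrite (tuple_env_ord _ ord0).
  case: x => [//|[t i]] /eqP/ord_inj -> /holds_lift_mso hp.
  by exists (t, l).
- case=> -[t i] -> hp; exists i; first by rewrite mem_enum inE.
  split; last exact/holds_lift_mso.
  by apply/sat_FLevel; rewrite (tuple_env_ord _ ord0) /= eqxx.
Qed.

Lemma lift_phi_eq_pos o (x : T') : holds (lift_phi_eq c o) (fun _ : 'I_1 => x) ->
  holds (phi_eq c (ext_pos x).2) (fun _ : 'I_1 => (ext_pos x).1).
Proof. by case/lift_phi_eqP => p ->. Qed.

Lemma lift_phi_relP s eta0 (p : 'I_(ar s) -> T * 'I_(k1 c).+1) :
  holds (lift_phi_rel c s eta0) (fun i => inr (p i) : T')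
  <-> holds (phi_rel c s (fun i => (p i).2)) (fun i => (p i).1).
Proof.
rewrite /holds sat_bigOr; split.
- case=> eta _ [/sat_bigAnd lvl /holds_lift_mso].
  suff -> : fun_of_fin eta = (fun i => (p i).2) by [].
  apply: functional_extensionality => i; apply: val_inj.
  have /lvl/sat_FLevel : i \in enum 'I_(ar s) by rewrite mem_enum inE.
  by rewrite tuple_env_ord; case: (p i) => t j /= /eqP ->.
- move=> h; exists [ffun i => (p i).2]; first by rewrite mem_enum inE.
  split.
    apply/sat_bigAnd => i _; apply/sat_FLevel.
    by rewrite tuple_env_ord ffunE; case: (p i) => t j /=.
  apply/holds_lift_mso.
  suff -> : fun_of_fin [ffun i => (p i).2] = (fun i => (p i).2) by [].
  by apply: functional_extensionality => i; rewrite ffunE.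
Qed.

Definition lift_elem (d : interp_dom (c:=c) T) : interp_dom (c:=lift_scheme c) T' :=
  exist _ (inr (sval d), ord0)
    ((lift_phi_eqP ord0 (inr (sval d))).2 (ex_intro2 _ _ (sval d) erefl (svalP d))).

Definition unlift_elem (d : interp_dom (c:=lift_scheme c) T') : interp_dom (c:=c) T :=
  exist _ (ext_pos (sval d).1) (@lift_phi_eq_pos (sval d).2 _ (svalP d)).

Lemma interp_lift_scheme : isomorphic (interp c T) (interp (lift_scheme c) T').
Proof.
exists lift_elem, unlift_elem; split; [|split].
- by case=> p h; apply: subset_eq_compat.
- case=> -[x o] h; apply: subset_eq_compat => /=.
  by have [p -> _] := (lift_phi_eqP o x).1 h; rewrite (ord1 o).
- by move=> s a; apply: iff_sym; apply: lift_phi_relP.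
Qed.
End LiftInterpretation.

Lemma isomorphic_trans (Sym : finType) (ar : Sym -> nat) (M N P : structure ar) :
  isomorphic M N -> isomorphic N P -> isomorphic M P.
Proof.
move=> [f [g [fK [gK f_rel]]]] [f' [g' [fK' [gK' f_rel']]]].
exists (f' \o f), (g \o g'); split; [|split].
- by move=> x /=; rewrite fK' fK.
- by move=> x /=; rewrite gK gK'.
- by move=> s a; rewrite f_rel f_rel'.
Qed.

Unset Implicit Arguments.

Theorem mainTheorem5 (Sym : finType) (ar : Sym -> nat) (k : nat)
    (c : scheme ar k) :
  exists c' : scheme ar (k + 2),
    k1 c' = 0 /\ k2 c' = k2 c + 2 /\
    (forall T : ktree (k2 c), exists T' : ktree (k2 c'),
        isomorphic (interp c T) (interp c' T')) /\
    (forall M : structure ar, Kmo c M -> Kmo c' M).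
Proof.
exists (lift_scheme c); do 3!split=> //.
  by move=> T; exists (ext_tree (k1 c) T); apply: interp_lift_scheme.
move=> M [T M_T]; exists (ext_tree (k1 c) T).
apply: isomorphic_trans M_T _; exact: interp_lift_scheme.
Qed.
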